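(* Let $(P,\mathcal{B})$ be a pairwise balanced design with $n\ge 2$ points, and let $\tau$ be the maximum size of a block in $\mathcal{B}$. Then \[\sum_{B\in\mathcal{B}}|B|\ \ge\ \frac{n(n-1)}{\tau-1}.\] Moreover, if $\mathcal{B}$ contains a block of size $k$, then \[\sum_{B\in\mathcal{B}}|B|\ \ge\ (n+1)k-\frac{k^2(k-1)}{n-1}\qquad\text{and}\qquad \sum_{B\in\mathcal{B}}|B|\ \ge\ k-\frac{(n-k)(n-5k-1)}{2}.\] Finally, for every integer $k$ with $n/2\le k\le n$, there exists a pairwise balanced design on $n$ points having a block of size $k$ for which $\sum_{B\in\mathcal{B}}|B| = k-\frac{(n-k)(n-5k-1)}{2}$.
   Context: A pairwise balanced design (PBD) is a pair $(P,\mathcal{B})$ where $P$ is a finite set of points and $\mathcal{B}$ is a family of subsets of $P$ (blocks) such that every two distinct points of $P$ lie in exactly one block. *)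

From HB Require Import structures.
From mathcomp Require Import all_boot all_order all_algebra.
Set Implicit Arguments. Unset Strict Implicit. Unset Printing Implicit Defensive.
Import Order.TTheory GRing.Theory Num.Theory.

(* Points are 'I_n; blocks form a family (a list, so repetitions allowed)
   of subsets of the points. *)
Definition is_PBD (n : nat) (bs : seq {set 'I_n}) : Prop :=
  forall x y : 'I_n, x != y ->
    count (fun B : {set 'I_n} => (x \in B) && (y \in B)) bs = 1%N.

Definition total_size (n : nat) (bs : seq {set 'I_n}) : nat :=
  \sum_(B <- bs) #|B|.

Definition max_block (n : nat) (bs : seq {set 'I_n}) : nat :=
  \max_(B <- bs) #|B|.

From HB Require Import structures.
From mathcomp Require Import all_boot all_order all_algebra.
From mathcomp Require Import zify ring lra.
Import Order.TTheory GRing.Theory Num.Theory.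

(* Counting ordered pairs of distinct points block by block gives
   sum_B |B| (|B| - 1) = n (n - 1), hence the first bound.  Fix a block B0 of
   size k and write a_B = |B \ B0|, b_B = |B :&: B0| for the other blocks.  The
   same count restricted to pairs outside B0, resp. to pairs joining the
   outside of B0 to B0, gives sum_B a_B (a_B - 1) = (n - k) (n - k - 1) and
   sum_B a_B b_B = (n - k) k, while b_B <= 1.  The other two bounds are weighted
   sums of an inequality in a_B and b_B (AM-GM, resp. (a - 1) (a - 2) >= 0).
   For n/2 <= k <= n, take B0 = {0, ..., k-1} and, for each c in B0, the lines
   {c, u, v} and {c, u} where the outer points u, v are matched by
   u + v = c (mod k): every such line has b = 1 and a in {1, 2}, which makes
   the second inequality an equality. *)

Set Implicit Arguments. Unset Strict Implicit. Unset Printing Implicit Defensive.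

Lemma pbd_count_pairs n (bs : seq {set 'I_n}) (S T : {set 'I_n}) : is_PBD bs ->
  \sum_(B <- bs) \sum_(x in S :&: B) #|(T :&: B) :\ x| = \sum_(x in S) #|T :\ x|.
Proof.
move=> bsP.
have pair_count x y : y \in T :\ x ->
    1 = \sum_(B <- bs) ((x \in B) && (y \in B) : nat).
  rewrite !inE => /andP[yx _].
  by rewrite -(bsP x y) 1?eq_sym // -sum1_count big_mkcond.
under [RHS]eq_bigr => x _ do
  rewrite -sum1_card (eq_bigr _ (pair_count x)) exchange_big /=.
rewrite exchange_big /=; apply: eq_bigr => B _.
rewrite [RHS]big_mkcond [LHS]big_mkcond /=; apply: eq_bigr => x _.
rewrite in_setI; case: (x \in S) => //=; case: (x \in B) => /=.
- rewrite -sum1_card big_mkcond [RHS]big_mkcond; apply: eq_bigr => y _.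
  by rewrite !inE; case: (y \in B); case: (y == x); case: (y \in T).
- by rewrite big1.
Qed.

Lemma sum_cardD1_sub n (A C : {set 'I_n}) : A \subset C ->
  \sum_(x in A) #|C :\ x| = #|A| * (#|C| - 1).
Proof.
move=> /subsetP AC; rewrite -sum_nat_const; apply: eq_bigr => x /AC xC.
by rewrite (cardsD1 x C) xC add1n subn1.
Qed.

Lemma sum_cardD1_disjoint n (A C : {set 'I_n}) : [disjoint A & C] ->
  \sum_(x in A) #|C :\ x| = #|A| * #|C|.
Proof.
move=> AC; rewrite -sum_nat_const; apply: eq_bigr => x xA.
by rewrite (cardsD1 x C) (disjointFr AC xA).
Qed.

Lemma pbd_sum_card_pairs n (bs : seq {set 'I_n}) : is_PBD bs ->
  \sum_(B <- bs) #|B| * (#|B| - 1) = n * (n - 1).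
Proof.
move=> /(pbd_count_pairs setT setT).
rewrite sum_cardD1_sub // cardsT card_ord => <-.
by apply: eq_bigr => B _; rewrite !setTI sum_cardD1_sub.
Qed.

Lemma pbd_pairs_le_total_size n (bs : seq {set 'I_n}) : is_PBD bs ->
  n * (n - 1) <= total_size bs * (max_block bs - 1).
Proof.
move=> /pbd_sum_card_pairs <-; rewrite /total_size big_distrl /= !big_seq.
apply: leq_sum => B Bbs; rewrite leq_mul2l leq_sub2r ?orbT //.
exact: leq_bigmax_seq.
Qed.

Section BlockSplit.
Variables (n : nat) (bs : seq {set 'I_n}) (B0 : {set 'I_n}).
Hypotheses (bsP : is_PBD bs) (B0_bs : B0 \in bs).

Local Notation outer B := #|~: B0 :&: B|.
Local Notation inner B := #|B0 :&: B|.

Lemma card_outer_inner (B : {set 'I_n}) : #|B| = outer B + inner B.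
Proof. by rewrite -(cardsID B0 B) addnC setDE setIC [B0 :&: B]setIC. Qed.

Lemma total_size_rem : total_size bs = \sum_(B <- rem B0 bs) #|B| + #|B0|.
Proof. by rewrite /total_size (big_rem B0 B0_bs) addnC. Qed.

Lemma sum_outer_inner :
  \sum_(B <- rem B0 bs) outer B * inner B = #|~: B0| * #|B0|.
Proof.
have := pbd_count_pairs (~: B0) B0 bsP.
rewrite sum_cardD1_disjoint ?disjoints_subset // => <-.
rewrite (big_rem B0 B0_bs) /= [~: B0 :&: B0]setIC setICr big_set0 add0n.
apply: eq_bigr => B _; rewrite sum_cardD1_disjoint //.
by rewrite disjoints_subset (subset_trans (subsetIl _ _)) // setCS subsetIl.
Qed.

Lemma sum_outer_pairs :
  \sum_(B <- rem B0 bs) outer B * (outer B - 1) = #|~: B0| * (#|~: B0| - 1).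
Proof.
have := pbd_count_pairs (~: B0) (~: B0) bsP.
rewrite sum_cardD1_sub // => <-.
rewrite (big_rem B0 B0_bs) /= [~: B0 :&: B0]setIC setICr big_set0 add0n.
by apply: eq_bigr => B _; rewrite sum_cardD1_sub.
Qed.

Lemma inner_le1 B : B \in rem B0 bs -> inner B <= 1.
Proof.
(* Two points of B0 lying in B would be covered by both B0 and B. *)
move=> B_rem; rewrite leqNgt; apply/card_gt1P => -[y1 [y2 [+ + y12]]].
rewrite !inE => /andP[y1B0 y1B] /andP[y2B0 y2B].
have := bsP y12; rewrite (permP (perm_to_rem B0_bs)) /= y1B0 y2B0 add1n => -[].
by apply/eqP; rewrite -lt0n -has_count; apply/hasP; exists B; rewrite ?y1B ?y2B.
Qed.

Lemma sum_rem_weighted_le (p q r s : nat) :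
    (forall a b, b <= 1 -> s * (a * b) <= p * (a + b) + q * (a * (a - 1)) + r * (a * b)) ->
  s * (#|~: B0| * #|B0|) <=
    p * \sum_(B <- rem B0 bs) #|B| + q * (#|~: B0| * (#|~: B0| - 1))
      + r * (#|~: B0| * #|B0|).
Proof.
move=> blockwise; rewrite -sum_outer_inner -sum_outer_pairs !big_distrr -!big_split.
rewrite /= !big_seq; apply: leq_sum => B /inner_le1 B_inner.
by rewrite (card_outer_inner B); apply: blockwise.
Qed.

Lemma sum_rem_weighted_eq (p q r s : nat) :
    (forall B, B \in rem B0 bs ->
       p * #|B| + q * (outer B * (outer B - 1)) + r * (outer B * inner B)
         = s * (outer B * inner B)) ->
  p * \sum_(B <- rem B0 bs) #|B| + q * (#|~: B0| * (#|~: B0| - 1))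
    + r * (#|~: B0| * #|B0|) = s * (#|~: B0| * #|B0|).
Proof.
move=> blockwise; rewrite -sum_outer_inner -sum_outer_pairs !big_distrr -!big_split.
by rewrite /= !big_seq; apply: eq_bigr.
Qed.

End BlockSplit.

(* For b = 1 this is AM-GM: 2 s (k a) <= s^2 + (k a)^2. *)
Lemma block_ineq_amgm (s k a b : nat) : b <= 1 ->
  (s * s + 2 * k * s) * (a * b)
    <= s * s * (a + b) + k * k * (a * (a - 1)) + k * k * (a * b).
Proof.
case: b => [|[|//]] _; first by rewrite !muln0.
have /leqifP := nat_Cauchy s (k * a); case: ifP => _; nia.
Qed.

(* For b = 1 this is (a - 1) (a - 2) >= 0. *)
Lemma block_ineq_poly (a b : nat) : b <= 1 -> 4 * (a * b) <= 2 * (a + b) + a * (a - 1).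
Proof. case: b => [|[|//]] _; nia. Qed.

Section LowerBounds.
Local Open Scope ring_scope.

Lemma natr_mulB1 (R : pzRingType) (a : nat) : a%:R * (a - 1)%:R = a%:R * (a%:R - 1) :> R.
Proof. by case: a => [|a]; rewrite ?mul0r // subSS subn0 -addn1 natrD addrK. Qed.

Lemma div_bound_of_weights (R : realFieldType) (k m s t : R) :
  s = k + m - 1 -> 0 < s ->
  (s * s + 2 * k * s) * (m * k) <= s * s * t + k * k * (m * (m - 1)) + k * k * (m * k) ->
  (k + m + 1) * k - k ^+ 2 * (k - 1) / s <= t + k.
Proof.
move=> sE s_gt0 weighted; rewrite -subr_ge0 -(pmulr_rge0 _ (mulr_gt0 s_gt0 s_gt0)).
suff -> : s * s * (t + k - ((k + m + 1) * k - k ^+ 2 * (k - 1) / s)) =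
    s * s * t + k * k * (m * (m - 1)) + k * k * (m * k) - (s * s + 2 * k * s) * (m * k).
  by rewrite subr_ge0.
rewrite sE; field; by rewrite -sE gt_eqF.
Qed.

Lemma pbd_total_size_ge_max_block n (bs : seq {set 'I_n}) : (2 <= n)%N -> is_PBD bs ->
  (n%:R * (n%:R - 1)) / ((max_block bs)%:R - 1) <= (total_size bs)%:R :> rat.
Proof.
move=> n_ge2 /pbd_pairs_le_total_size pairs_le.
have tau_ge2 : (2 <= max_block bs)%N.
  rewrite ltnNge; apply: contraTN pairs_le => tau_le1.
  have /eqP -> : (max_block bs - 1 == 0)%N by rewrite subn_eq0.
  by rewrite muln0 -ltnNge muln_gt0 subn_gt0 (ltnW n_ge2).
have -> : (max_block bs)%:R - 1 = (max_block bs - 1)%:R :> rat.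
  by rewrite (natrB _ (ltnW tau_ge2)).
by rewrite ler_pdivrMr ?ltr0n ?subn_gt0 // -natr_mulB1 -!natrM ler_nat.
Qed.

Lemma pbd_total_size_ge_block_div n (bs : seq {set 'I_n}) B0 :
  (2 <= n)%N -> is_PBD bs -> B0 \in bs ->
  (n%:R + 1) * #|B0|%:R - #|B0|%:R ^+ 2 * (#|B0|%:R - 1) / (n%:R - 1)
    <= (total_size bs)%:R :> rat.
Proof.
move=> n_ge2 bsP B0_bs.
have n_split : n%:R = #|B0|%:R + #|~: B0|%:R :> rat by rewrite -natrD cardsC card_ord.
have := sum_rem_weighted_le bsP B0_bs (block_ineq_amgm (n - 1) #|B0|).
rewrite -(ler_nat rat) !(natrD, natrM) natr_mulB1 (natrB _ (ltnW n_ge2)).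
have s_gt0 : 0 < n%:R - 1 :> rat by rewrite subr_gt0 ltr1n.
rewrite (total_size_rem B0_bs) natrD; rewrite n_split in s_gt0 *.
exact: div_bound_of_weights.
Qed.

Lemma pbd_total_size_ge_block_poly n (bs : seq {set 'I_n}) B0 : is_PBD bs -> B0 \in bs ->
  #|B0|%:R - (n%:R - #|B0|%:R) * (n%:R - 5 * #|B0|%:R - 1) / 2
    <= (total_size bs)%:R :> rat.
Proof.
move=> bsP B0_bs.
have n_split : n%:R = #|B0|%:R + #|~: B0|%:R :> rat by rewrite -natrD cardsC card_ord.
have blockwise a b : (b <= 1)%N -> (4 * (a * b) <= 2 * (a + b) + 1 * (a * (a - 1)) + 0 * (a * b))%N.
  by rewrite mul1n mul0n addn0; apply: block_ineq_poly.
have := sum_rem_weighted_le bsP B0_bs blockwise.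
rewrite -(ler_nat rat) !(natrD, natrM) natr_mulB1 (total_size_rem B0_bs) natrD n_split.
lra.
Qed.

End LowerBounds.

Section TightDesign.
Variables n k : nat.
Hypothesis n_le_2k : n <= 2 * k.

(* Outer points u, v lie in [k, 2k), so 2k <= u + v < 4k and [partner u c v]
   says u + v = c (mod k). *)
Definition partner (u c v : nat) : bool :=
  [&& k <= v, v != u & (u + v == c + 2 * k) || (u + v == c + 3 * k)].

Definition on_line (u c z : nat) : bool := [|| z == u, z == c | partner u c z].

Definition colour (u v : nat) : nat :=
  if u + v < 3 * k then u + v - 2 * k else u + v - 3 * k.

Definition in_block (x y z : nat) : bool :=
  if (x < k) && (y < k) then z < k
  else if x < k then on_line y x z
  else if y < k then on_line x y z
  else on_line x (colour x y) z.

Lemma on_line_partner u v c z : k <= u < n -> v < n -> z < n -> c < k ->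
  partner u c v -> on_line v c z = on_line u c z.
Proof. rewrite /on_line /partner => *; lia. Qed.

Lemma colour_partner u v c : k <= u < n -> v < n -> c < k ->
  partner u c v -> colour u v = c.
Proof. rewrite /colour /partner => *; case: ifP; lia. Qed.

Lemma partner_sym u v c : k <= u < n -> v < n -> c < k ->
  partner u c v -> partner v c u.
Proof. rewrite /partner => *; lia. Qed.

Lemma on_line_in_block u c x y z : k <= u < n -> c < k -> x < n -> y < n -> z < n ->
  x != y -> on_line u c x -> on_line u c y -> on_line u c z = in_block x y z.
Proof.
move=> u_outer c_lt x_lt y_lt z_lt xy.
have u_ge : (u < k) = false by lia.
have partner_outer v : partner u c v -> (v < k) = false by rewrite /partner; lia.
rewrite {1 2}/on_line => /or3P[/eqP Ex|/eqP Ex|Px] /or3P[/eqP Ey|/eqP Ey|Py];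
  try subst x; try subst y.
- by rewrite eqxx in xy.
- by rewrite /in_block u_ge c_lt.
- by rewrite /in_block u_ge (partner_outer y Py) (colour_partner u_outer y_lt c_lt Py).
- by rewrite /in_block u_ge c_lt.
- by rewrite eqxx in xy.
- by rewrite /in_block (partner_outer y Py) c_lt /= (on_line_partner u_outer y_lt z_lt c_lt Py).
- have x_outer : k <= x < n by move: Px; rewrite /partner; lia.
  rewrite /in_block (partner_outer x Px) u_ge /=.
  rewrite (colour_partner x_outer y_lt c_lt (partner_sym u_outer x_lt c_lt Px)).
  by rewrite (on_line_partner u_outer x_lt z_lt c_lt Px).
- by rewrite /in_block (partner_outer x Px) c_lt /= (on_line_partner u_outer x_lt z_lt c_lt Px).
- by move: Px Py xy; rewrite /partner; lia.
Qed.

Lemma in_block_ends x y : x < n -> y < n -> in_block x y x && in_block x y y.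
Proof.
move=> x_lt y_lt; rewrite /in_block /on_line /partner /colour.
case: (ltnP x k) => x_k; case: (ltnP y k) => y_k /=; rewrite ?eqxx ?orbT //=.
case: ifP => ?; lia.
Qed.

Definition core : {set 'I_n} := [set z : 'I_n | z < k].
Definition line (u c : nat) : {set 'I_n} := [set z : 'I_n | on_line u c z].
Definition block (x y : 'I_n) : {set 'I_n} := [set z : 'I_n | in_block x y z].
Definition tight_design : seq {set 'I_n} :=
  undup [seq block x y | x <- enum 'I_n, y <- enum 'I_n].

Lemma block_core_or_line (x y : 'I_n) :
  block x y = core \/ exists u c, [/\ k <= u < n, c < k & block x y = line u c].
Proof.
have [x_k|x_k] := ltnP x k; have [y_k|y_k] := ltnP y k.
- by left; apply/setP => z; rewrite !inE /in_block x_k y_k.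
- right; exists y, x; rewrite y_k ltn_ord x_k; split=> //.
  by apply/setP => z; rewrite !inE /in_block x_k ltnNge y_k.
- right; exists x, y; rewrite x_k ltn_ord y_k; split=> //.
  by apply/setP => z; rewrite !inE /in_block y_k ltnNge x_k.
- right; exists x, (colour x y); rewrite x_k ltn_ord; split=> //.
  + by rewrite /colour; have := ltn_ord x; have := ltn_ord y; case: ifP => ?; lia.
  + by apply/setP => z; rewrite !inE /in_block !ltnNge x_k y_k.
Qed.

Lemma block_in_tight_design (x y : 'I_n) : block x y \in tight_design.
Proof. by rewrite mem_undup; apply: allpairs_f; rewrite mem_enum. Qed.

Lemma mem_tight_design B : B \in tight_design ->
  B = core \/ exists u c, [/\ k <= u < n, c < k & B = line u c].
Proof. by rewrite mem_undup => /allpairsP[[x y] [_ _ ->]]; apply: block_core_or_line. Qed.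

Lemma tight_design_PBD : is_PBD tight_design.
Proof.
move=> x y xy; rewrite (@eq_in_count _ _ (pred1 (block x y))).
  by rewrite count_uniq_mem ?undup_uniq // block_in_tight_design.
move=> B /mem_tight_design B_shape /=; apply/idP/eqP => [|->]; last first.
  by rewrite !inE; apply: in_block_ends.
case: B_shape => [->|[u [c [u_outer c_lt ->]]]]; rewrite !inE => /andP[xB yB].
- by apply/setP => z; rewrite !inE /in_block xB yB.
- by apply/setP => z; rewrite !inE; apply: on_line_in_block.
Qed.

Hypotheses (k_le_n : k <= n) (n_ge2 : 2 <= n).

Lemma core_in_tight_design : core \in tight_design.
Proof.
have n_gt0 : 0 < n by lia.
suff -> : core = block (Ordinal n_gt0) (Ordinal n_gt0) by apply: block_in_tight_design.
by apply/setP => z; rewrite !inE /in_block /= (_ : 0 < k) //; lia.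
Qed.

Lemma card_core : #|core| = k.
Proof.
have widen_inj : injective (widen_ord k_le_n) by move=> i j /(congr1 val) /= /val_inj.
rewrite -[RHS]card_ord -cardsT -(card_imset _ widen_inj).
apply: eq_card => z; rewrite !inE; apply/idP/imsetP => [z_k|[i _ ->]].
- by exists (Ordinal z_k) => //; apply: val_inj.
- by rewrite /= ltn_ord.
Qed.

Lemma line_weights B : B \in rem core tight_design ->
  2 * #|B| + #|~: core :&: B| * (#|~: core :&: B| - 1)
    = 4 * (#|~: core :&: B| * #|core :&: B|).
Proof.
move=> B_rem; have B_ne : B != core.
  by move: B_rem; rewrite mem_rem_uniq ?undup_uniq // !inE => /andP[].
case: (mem_tight_design (mem_rem B_rem)) => [B_core|[u [c [u_outer c_lt ->]]]].
  by rewrite B_core eqxx in B_ne.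
have c_lt_n : c < n by lia.
have u_lt_n : u < n by lia.
rewrite (card_outer_inner core (line u c)).
have -> : core :&: line u c = [set Ordinal c_lt_n].
  by apply/setP => z; rewrite !inE -val_eqE /= /on_line /partner; lia.
rewrite cards1.
set A := ~: core :&: line u c.
have u_A : Ordinal u_lt_n \in A by rewrite !inE /on_line eqxx /=; lia.
have partner_le1 : #|A :\ Ordinal u_lt_n| <= 1.
  apply/card_le1_eqP => z1 z2; rewrite !inE -!val_eqE /= /on_line /partner => z1A z2A.
  by apply: ord_inj; have := ltn_ord z1; have := ltn_ord z2; lia.
rewrite (cardsD1 (Ordinal u_lt_n) A) u_A.
by case: #|A :\ Ordinal u_lt_n| partner_le1 => [|[|]].
Qed.

Local Open Scope ring_scope.

Lemma tight_design_total_size :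
  (total_size tight_design)%:R = k%:R - (n%:R - k%:R) * (n%:R - 5 * k%:R - 1) / 2 :> rat.
Proof.
have core_in := core_in_tight_design.
have n_split : n%:R = k%:R + #|~: core|%:R :> rat.
  by rewrite -card_core -natrD cardsC card_ord.
have blockwise B : B \in rem core tight_design ->
    (2 * #|B| + 1 * (#|~: core :&: B| * (#|~: core :&: B| - 1))
      + 0 * (#|~: core :&: B| * #|core :&: B|)
     = 4 * (#|~: core :&: B| * #|core :&: B|))%N.
  by move=> /line_weights; rewrite mul1n mul0n addn0.
have /(congr1 (fun m => m%:R : rat)) := sum_rem_weighted_eq tight_design_PBD core_in blockwise.
rewrite !(natrD, natrM) natr_mulB1 (total_size_rem core_in) natrD card_core n_split.
lra.
Qed.

End TightDesign.

Local Open Scope ring_scope.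

Theorem mainTheorem5 (n : nat) : (2 <= n)%N ->
  (forall bs : seq {set 'I_n}, is_PBD bs ->
     [/\ (n%:R * (n%:R - 1)) / ((max_block bs)%:R - 1) <= (total_size bs)%:R :> rat
       & forall k : nat, (exists2 B, B \in bs & #|B| = k) ->
           ((n%:R + 1) * k%:R - k%:R ^+ 2 * (k%:R - 1) / (n%:R - 1)
              <= (total_size bs)%:R :> rat)
           /\ (k%:R - (n%:R - k%:R) * (n%:R - 5 * k%:R - 1) / 2
              <= (total_size bs)%:R :> rat)])
  /\
  (forall k : nat, (n <= 2 * k)%N -> (k <= n)%N ->
     exists bs : seq {set 'I_n},
       [/\ is_PBD bs, (exists2 B, B \in bs & #|B| = k) &
           (total_size bs)%:R = k%:R - (n%:R - k%:R) * (n%:R - 5 * k%:R - 1) / 2 :> rat]).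
Proof.
move=> n_ge2; split=> [bs bsP | k n_le_2k k_le_n].
  split=> [|k [B0 B0_bs <-]]; first exact: pbd_total_size_ge_max_block.
  split; [exact: pbd_total_size_ge_block_div | exact: pbd_total_size_ge_block_poly].
exists (tight_design n k); split.
- exact: tight_design_PBD.
- by exists (core n k); [apply: core_in_tight_design | apply: card_core].
- exact: tight_design_total_size.
Qed.
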